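(* For $N\ge1$ and generic complex $\mathfrak t,\chi,u_1,\dots,u_N,v_1,\dots,v_N$, $$\frac{1}{\prod_{1\le i<j\le N}(u_i-u_j)}\det\Big[u_j^{N-i-1}\Big\{(u_j-\mathfrak t^{1-N})\prod_{l=1}^N\frac{1-\mathfrak tu_jv_l}{1-u_jv_l}+\mathfrak t^{1-i}(1-\chi u_j)\Big\}\Big]_{i,j=1}^N$$ $$=\frac{\prod_{i,j=1}^N(1-\mathfrak tu_iv_j)}{\prod_{1\le i<j\le N}(u_i-u_j)(v_i-v_j)}\det\left[\frac{(1-\mathfrak t^{-N}\chi)\mathfrak t(1-u_iv_j)+(1-\mathfrak t)(1-\mathfrak t^{1-N}v_j)}{(1-u_iv_j)(1-\mathfrak tu_iv_j)}\right]_{i,j=1}^N.$$ *)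

(* Complex numbers are modelled as R[i] (mathcomp-real-closed
   `complex`) over a real numbers type R : realType. *)
From mathcomp Require Import all_boot all_order all_algebra.
From mathcomp Require Import complex reals.
Set Implicit Arguments. Unset Strict Implicit. Unset Printing Implicit Defensive.
Import Order.TTheory GRing.Theory Num.Theory.
Local Open Scope ring_scope.

Definition vdm (F : ringType) (N : nat) (x : 'I_N -> F) : F :=
  \prod_(i < N) \prod_(j < N | (i < j)%N) (x i - x j).

(* Left-hand matrix (indices 0-based: row i here is row i+1 of the paper):
   u_j^{N-(i+1)-1} { (u_j - t^{1-N}) prod_l (1 - t u_j v_l)/(1 - u_j v_l)
                     + t^{1-(i+1)} (1 - chi u_j) } *)
Definition lhs_mx (F : fieldType) (N : nat) (t chi : F) (u v : 'I_N -> F)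
  : 'M[F]_N :=
  \matrix_(i < N, j < N)
    (u j ^ (N%:Z - i%:Z - 2%:Z) *
     ((u j - t ^ (1 - N%:Z)) *
        (\prod_(l < N) ((1 - t * u j * v l) / (1 - u j * v l)))
      + t ^ (- i%:Z) * (1 - chi * u j))).

Definition rhs_mx (F : fieldType) (N : nat) (t chi : F) (u v : 'I_N -> F)
  : 'M[F]_N :=
  \matrix_(i < N, j < N)
    (((1 - t ^ (- N%:Z) * chi) * t * (1 - u i * v j)
       + (1 - t) * (1 - t ^ (1 - N%:Z) * v j))
     / ((1 - u i * v j) * (1 - t * u i * v j))).

From mathcomp Require Import all_boot all_order all_algebra.
From mathcomp Require Import complex reals.
From mathcomp Require Import ring zify.
Import Order.TTheory GRing.Theory Num.Theory.
Set Implicit Arguments. Unset Strict Implicit. Unset Printing Implicit Defensive.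
Local Open Scope ring_scope.

(* Write N = n+1 and let C be the N x N matrix whose j-th column
   holds the coefficients of  omit_poly j = prod_{l <> j} (X - v_l).
   1. Evaluating these polynomials at the nodes v_i shows that
      (Vandermonde of v)^T * C is diagonal; comparing determinants gives
      det C = prod_{i<j} (v_i - v_j), the Vandermonde product of v.
   2. Row i of the left matrix, paired with column j of C, is a sum of the
      coefficients of omit_poly j against powers of u_i, i.e. a reversed
      evaluation of omit_poly j, which equals prod_{l <> j} (1 - c u_i v_l)
      for c = 1 and c = t.  A rational-function identity in the remaining
      variables then gives the matrix identity
         L^T * C = diag_i (prod_l (1 - t u_i v_l)) * R.
   3. Taking determinants and dividing by the two Vandermonde products yields
      the theorem.  Everything is proved over an arbitrary field F; the
      complex numbers are just an instance. *)

Section Identity.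
Variable F : fieldType.

Lemma offdiag_prod_neq0 n (x : 'I_n -> F) :
  injective x -> \prod_(i < n) \prod_(l < n | l != i) (x i - x l) != 0.
Proof.
move=> x_inj; apply/prodf_neq0 => i _; apply/prodf_neq0 => l li.
by rewrite subr_eq0; apply: contra li => /eqP/x_inj ->.
Qed.

Lemma offdiag_prod_split n (x : 'I_n -> F) :
  \prod_(i < n) \prod_(l < n | l != i) (x i - x l)
  = vdm x * \prod_(i < n) \prod_(j < n | (i < j)%N) (x j - x i).
Proof.
have lower_swap : \prod_(i < n) \prod_(l < n | (l < i)%N) (x i - x l)
    = \prod_(i < n) \prod_(j < n | (i < j)%N) (x j - x i).
  by rewrite (exchange_big_dep xpredT).
rewrite /vdm -lower_swap -big_split /=; apply: eq_bigr => i _.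
rewrite (bigID (fun l : 'I_n => (i < l)%N)) /=.
by congr (_ * _); apply: eq_bigl => l; rewrite -(inj_eq val_inj) /=;
  case: ltngtP.
Qed.

Lemma vdm_neq0 n (x : 'I_n -> F) : injective x -> vdm x != 0.
Proof.
by move=> /offdiag_prod_neq0; rewrite offdiag_prod_split mulf_eq0 negb_or => /andP[].
Qed.

Lemma sum_coef_rev (p : {poly F}) n (x c : F) :
  (size p <= n.+1)%N -> c * x != 0 ->
  \sum_(k < n.+1) x ^+ (n - k) / c ^+ k * p`_k
  = (c ^+ n)^-1 * ((c * x) ^+ n * p.[(c * x)^-1]).
Proof.
move=> size_p cx0; have [c0 x0] : c != 0 /\ x != 0.
  by move: cx0; rewrite mulf_eq0 negb_or => /andP[].
rewrite (horner_coef_wide _ size_p) !mulr_sumr; apply: eq_bigr => k _.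
have : (k <= n)%N := ltn_ord k.
move: (nat_of_ord k) => m m_le_n.
rewrite -[in RHS](subnK m_le_n) !exprD !exprVn !exprMn; field.
by rewrite !expf_neq0.
Qed.

Lemma exprz_row (x : F) n k : x != 0 -> (k <= n)%N ->
  x ^ (n.+1%:Z - k%:Z - 2%:Z) = x ^+ (n - k) / x.
Proof.
move=> x0 k_le_n; have -> : n.+1%:Z - k%:Z - 2%:Z = (n - k)%N%:Z + (-1) by lia.
by rewrite expfzDr // exprN1 -exprnP.
Qed.

Lemma exprz_1_sub (t : F) n : t ^ (1 - n.+1%:Z) = (t ^+ n)^-1.
Proof.
have -> : 1 - n.+1%:Z = - n%:Z by lia.
by rewrite -exprnN.
Qed.

Variables (n : nat) (v : 'I_n.+1 -> F).

Definition omit_poly (j : 'I_n.+1) : {poly F} :=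
  \prod_(l < n.+1 | l != j) ('X - (v l)%:P).

Definition omit_coef_mx : 'M[F]_n.+1 := \matrix_(k, j) (omit_poly j)`_k.

Lemma card_omit (j : 'I_n.+1) : #|[pred l : 'I_n.+1 | l != j]| = n.
Proof. by rewrite cardC1 card_ord. Qed.

Lemma size_omit_poly j : size (omit_poly j) = n.+1.
Proof.
rewrite /omit_poly -big_filter size_prod_XsubC size_filter -sum1_count.
by rewrite sum1_card card_omit.
Qed.

Lemma horner_omit_poly i j :
  (omit_poly j).[v i] = \prod_(l < n.+1 | l != i) (v i - v l) *+ (i == j).
Proof.
rewrite /omit_poly horner_prod; have [-> | ij] := eqVneq i j.
  by rewrite mulr1n; apply: eq_bigr => l _; rewrite hornerXsubC.
by rewrite mulr0n (bigD1 i) //= hornerXsubC subrr mul0r.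
Qed.

Lemma Vandermonde_omit_coef :
  (Vandermonde n.+1 (\row_j v j))^T *m omit_coef_mx
  = diag_mx (\row_i \prod_(l < n.+1 | l != i) (v i - v l)).
Proof.
apply/matrixP => i j; rewrite !mxE -horner_omit_poly.
rewrite (horner_coef_wide _ (eq_leq (size_omit_poly j))).
by apply: eq_bigr => k _; rewrite !mxE mulrC.
Qed.

Lemma det_omit_coef_mx : injective v -> \det omit_coef_mx = vdm v.
Proof.
move=> v_inj; have := congr1 determinant Vandermonde_omit_coef.
rewrite det_mulmx det_tr det_diag det_Vandermonde.
under eq_bigr do rewrite mxE.
under [X in X * _ = _]eq_bigr do under eq_bigr do rewrite !mxE.
rewrite offdiag_prod_split mulrC => /mulIf; apply.
by apply: contraNneq (offdiag_prod_neq0 v_inj); rewrite offdiag_prod_split => ->;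
  rewrite mulr0.
Qed.

Lemma omit_poly_rev (y : F) j : y != 0 ->
  y ^+ n * (omit_poly j).[y^-1] = \prod_(l < n.+1 | l != j) (1 - y * v l).
Proof.
move=> y0; rewrite /omit_poly horner_prod.
have -> : y ^+ n = \prod_(l < n.+1 | l != j) y by rewrite prodr_const card_omit.
rewrite -big_split /=.
by apply: eq_bigr => l _; rewrite hornerXsubC mulrBr mulfV.
Qed.

Lemma lhs_omit_entry (t chi : F) (u : 'I_n.+1 -> F) i j :
  t != 0 -> u i != 0 ->
  ((lhs_mx t chi u v)^T *m omit_coef_mx) i j
  = (u i)^-1 *
    ((u i - (t ^+ n)^-1) *
       \prod_(l < n.+1) ((1 - t * u i * v l) / (1 - u i * v l)) *
       \prod_(l < n.+1 | l != j) (1 - u i * v l)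
     + (1 - chi * u i) * (t ^+ n)^-1 *
       \prod_(l < n.+1 | l != j) (1 - t * u i * v l)).
Proof.
move=> t0 x0; rewrite !mxE.
set x := u i; set P := \prod_(l < n.+1) _.
have -> : \sum_k (lhs_mx t chi u v)^T i k * omit_coef_mx k j
   = x^-1 * ((x - (t ^+ n)^-1) * P *
               (\sum_(k < n.+1) x ^+ (n - k) / 1 ^+ k * (omit_poly j)`_k)
             + (1 - chi * x) *
               (\sum_(k < n.+1) x ^+ (n - k) / t ^+ k * (omit_poly j)`_k)).
  rewrite !mulr_sumr -big_split mulr_sumr /=; apply: eq_bigr => k _.
  rewrite !mxE exprz_row ?exprz_1_sub -?exprnN ?expr1n ?invr1 -/x -/P //.
    by ring.
  by rewrite -ltnS.
rewrite !(sum_coef_rev (eq_leq (size_omit_poly j))) ?mulf_neq0 ?oner_neq0 //.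
by rewrite expr1n invr1 !mul1r !omit_poly_rev ?mulf_neq0 // mulrA.
Qed.

(* After step 2a only the factor l = j of the products differs between
   the two sides, and the entries agree by a rational-function identity. *)
Lemma lhs_omit_coef_mx (t chi : F) (u : 'I_n.+1 -> F) :
  t != 0 -> (forall i, u i != 0) ->
  (forall i j, 1 - u i * v j != 0) -> (forall i j, 1 - t * u i * v j != 0) ->
  (lhs_mx t chi u v)^T *m omit_coef_mx
  = diag_mx (\row_i \prod_(l < n.+1) (1 - t * u i * v l)) *m rhs_mx t chi u v.
Proof.
move=> t0 u0 uv0 tuv0; apply/matrixP => i j.
rewrite lhs_omit_entry // mul_diag_mx !mxE.
have x0 := u0 i; have xj0 := uv0 i j; have txj0 := tuv0 i j.
set x := u i in x0 xj0 txj0 *.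
rewrite (bigD1 j) //= [\prod_(l < n.+1) (1 - t * x * v l)](bigD1 j) //=.
have <- : \prod_(l < n.+1 | l != j) ((1 - t * x * v l) / (1 - x * v l))
          * \prod_(l < n.+1 | l != j) (1 - x * v l)
        = \prod_(l < n.+1 | l != j) (1 - t * x * v l).
  by rewrite -big_split; apply: eq_bigr => l _ /=; rewrite divfK ?uv0.
rewrite exprz_1_sub -exprnN exprSr; field.
by rewrite xj0 txj0 x0 t0 expf_neq0.
Qed.

End Identity.

(* Step 3, over an arbitrary field, for N = n + 1; only v needs distinct
   entries, since vdm u is merely carried along on both sides. *)
Lemma lhs_rhs_det (F : fieldType) n (t chi : F) (u v : 'I_n.+1 -> F) :
  t != 0 -> (forall j, u j != 0) -> injective v ->
  (forall i j, 1 - u i * v j != 0) -> (forall i j, 1 - t * u i * v j != 0) ->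
  (vdm u)^-1 * \det (lhs_mx t chi u v)
  = (\prod_(i < n.+1) \prod_(j < n.+1) (1 - t * u i * v j))
      / (vdm u * vdm v) * \det (rhs_mx t chi u v).
Proof.
move=> t0 u0 v_inj uv0 tuv0.
have := congr1 determinant (lhs_omit_coef_mx chi t0 u0 uv0 tuv0).
rewrite !det_mulmx det_tr det_omit_coef_mx // det_diag.
under eq_bigr do rewrite mxE.
move=> det_eq; rewrite -[\det (lhs_mx _ _ _ _)](mulfK (vdm_neq0 v_inj)) det_eq.
by rewrite invfM; ring.
Qed.

Theorem mainTheorem6 (R : realType) (N : nat) (t chi : R[i])
  (u v : 'I_N -> R[i])
  (hN : (1 <= N)%N)
  (ht : t != 0)
  (hu0 : forall j, u j != 0)
  (hu : injective u) (hv : injective v)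
  (huv : forall i j, 1 - u i * v j != 0)
  (htuv : forall i j, 1 - t * u i * v j != 0) :
  (vdm u)^-1 * \det (lhs_mx t chi u v)
  = (\prod_(i < N) \prod_(j < N) (1 - t * u i * v j))
      / (vdm u * vdm v) * \det (rhs_mx t chi u v).
Proof.
case: N hN u v hu0 hu hv huv htuv => [//|n] _ u v hu0 _ hv huv htuv.
exact: lhs_rhs_det.
Qed.
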